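(* Let $n$ be a positive integer, let $\mathcal{K}$ be a finite subset of $\mathbb{Z}_+^n$ containing $\mathbf{0}=(0,\ldots,0)$, and let $(s_{\mathbf{k}})_{\mathbf{k}\in\mathcal{K}}$ be complex numbers. There exists a (non-negative) measure $\mu$ on the Borel $\sigma$-algebra $\mathfrak{B}(\mathbb{C}^n)$ such that $$\int_{\mathbb{C}^n} \mathbf{z}^{\mathbf{k}}\, d\mu(\mathbf{z}) = s_{\mathbf{k}}\qquad \text{for all } \mathbf{k}\in\mathcal{K}$$ if and only if one of the following conditions holds: (a) $s_{\mathbf{0}}>0$; (b) $s_{\mathbf{k}}=0$ for all $\mathbf{k}\in\mathcal{K}$. Moreover, if one of conditions (a), (b) is satisfied, then there exists such a measure $\mu$ with compact support.
   Context: $\mathbb{Z}_+$ denotes the set of non-negative integers. For $\mathbf{k}=(k_1,\ldots,k_n)\in\mathbb{Z}_+^n$ and $\mathbf{z}=(z_1,\ldots,z_n)\in\mathbb{C}^n$, $\mathbf{z}^{\mathbf{k}}$ denotes the monomial $z_1^{k_1}\cdots z_n^{k_n}$ (no complex conjugates appear). A measure here means a non-negative measure on the Borel sets of $\mathbb{C}^n$, with respect to which the monomials $\mathbf{z}^{\mathbf{k}}$, $\mathbf{k}\in\mathcal{K}$, are integrable. *)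

From HB Require Import structures.
From mathcomp Require Import all_boot all_order all_algebra.
From mathcomp Require Import complex.
From mathcomp Require Import all_classical all_reals all_analysis.
Set Implicit Arguments. Unset Strict Implicit. Unset Printing Implicit Defensive.
Import Order.TTheory GRing.Theory Num.Theory.
Import numFieldTopology.Exports.
Local Open Scope ring_scope.
Local Open Scope classical_set_scope.

(** C^n is represented as R^n x R^n (real parts, imaginary parts), with the
    Euclidean (product) topology; a point p corresponds to the vector
    z = (p.1 0 i + i * p.2 0 i)_i of complex numbers in R[i]. *)
Definition Cn (R : realType) (n : nat) : topologicalType :=
  ('rV[R]_n * 'rV[R]_n)%type.

Definition CnB (R : realType) (n : nat) := g_sigma_algebraType (@open (Cn R n)).

Definition zcoord (R : realType) (n : nat) (p : Cn R n) (i : 'I_n) : R[i] :=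
  (p.1 0 i +i* p.2 0 i)%C.

Definition monomial (R : realType) (n : nat) (k : 'I_n -> nat) (p : Cn R n) : R[i] :=
  \prod_(i < n) zcoord p i ^+ k i.

Definition cintegrable (R : realType) (n : nat)
    (mu : {measure set (CnB R n) -> \bar R}) (f : CnB R n -> R[i]) : Prop :=
  mu.-integrable setT (fun p => (complex.Re (f p))%:E) /\
  mu.-integrable setT (fun p => (complex.Im (f p))%:E).

Definition cintegral (R : realType) (n : nat)
    (mu : {measure set (CnB R n) -> \bar R}) (f : CnB R n -> R[i]) : R[i] :=
  (fine (\int[mu]_p (complex.Re (f p))%:E) +i*
   fine (\int[mu]_p (complex.Im (f p))%:E))%C.

Definition has_moments (R : realType) (n : nat)
    (mu : {measure set (CnB R n) -> \bar R})
    (K : set ('I_n -> nat)) (s : ('I_n -> nat) -> R[i]) : Prop :=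
  forall k, K k ->
    cintegrable mu (monomial k) /\ cintegral mu (monomial k) = s k.

Definition compact_support (R : realType) (n : nat)
    (mu : {measure set (CnB R n) -> \bar R}) : Prop :=
  exists C : set (Cn R n), compact C /\ mu (~` C) = 0%E.

From HB Require Import structures.
From mathcomp Require Import all_boot all_order all_algebra.
From mathcomp Require Import complex.
From mathcomp Require Import all_classical all_reals all_analysis.
From mathcomp Require Import measurable_realfun.
From mathcomp Require cyclic cyclotomic separable.
Set Implicit Arguments. Unset Strict Implicit. Unset Printing Implicit Defensive.
Import Order.TTheory GRing.Theory Num.Theory.
Import numFieldTopology.Exports.
Local Open Scope ring_scope.
Local Open Scope classical_set_scope.

(* The moment of z^0 is the total mass, which is therefore a nonnegative real;
   if it vanishes, so do all moments.  Conversely, take B larger than every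
   exponent occurring in K: then k |-> sum_i B^i k_i is injective on K, and on
   the curve w |-> (w^(B^0), ..., w^(B^(n-1))) the monomial z^k is the power
   w^(sum_i B^i k_i).  This reduces the problem to one complex variable, where
   any t_0 > 0, t_1, ..., t_D are the moments of a finite atomic measure:
   by induction on D, add to a solution for (t_0/2, t_1, ..., t_(D-1)) the
   uniform measure of mass t_0/2 on the D-th roots of a suitable c, whose
   moments of orders 1, ..., D-1 vanish.  Atomic measures have compact
   support. *)

Section DiscreteMoments.
Variable C : numClosedFieldType.
Implicit Types (L : seq (C * C)) (a z w : C).

Definition dmoment L m : C := \sum_(x <- L) x.1 * x.2 ^+ m.

(* In a [numClosedFieldType], [0 <= x] says that [x] is a nonnegative real. *)
Definition nonneg_weights L := all (fun x => 0 <= x.1) L.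

Lemma dmoment_cat L1 L2 m : dmoment (L1 ++ L2) m = dmoment L1 m + dmoment L2 m.
Proof. exact: big_cat. Qed.

Lemma prim_root_exists d : (0 < d)%N -> exists w : C, d.-primitive_root w.
Proof.
move=> d_gt0; have [r Dp] := closed_field_poly_normal ('X^d - 1 : {poly C}).
rewrite (monicP _) ?monicXnsubC // scale1r in Dp.
have rn1 : all d.-unity_root r by apply/allP=> z; rewrite -root_prod_XsubC -Dp.
have sz_r : (d < (size r).+1)%N.
  by rewrite -(size_prod_XsubC r id) -Dp size_XnsubC.
have [|w] := hasP (cyclic.has_prim_root d_gt0 rn1 _ sz_r); last by exists w.
rewrite -separable.separable_prod_XsubC -Dp cyclotomic.separable_Xn_sub_1 //.
by rewrite pnatr_eq0 -lt0n.
Qed.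

Lemma prim_root_expr_sum d w m : d.-primitive_root w ->
  \sum_(j < d) (w ^+ m) ^+ j = if (d %| m)%N then d%:R else 0.
Proof.
move=> w_prim; have wd1 := prim_expr_order w_prim.
case: ifP => [/dvdnP[q ->]|d_ndvd_m].
  rewrite mulnC exprM wd1 expr1n.
  by rewrite (eq_bigr (fun _ => 1)) => [|j _]; rewrite ?expr1n // sumr_const card_ord.
have : (w ^+ m - 1) * \sum_(j < d) (w ^+ m) ^+ j = 0.
  by rewrite -subrX1 exprAC wd1 expr1n subrr.
move/eqP; rewrite mulf_eq0 subr_eq0 -(prim_order_dvd w_prim) d_ndvd_m.
by move/eqP.
Qed.

Definition cyclic_atoms a z w d : seq (C * C) :=
  [seq (a / d%:R, z * w ^+ j) | j <- index_iota 0 d].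

Lemma nonneg_cyclic_atoms a z w d : 0 <= a -> nonneg_weights (cyclic_atoms a z w d).
Proof.
by move=> a_ge0; apply/allP => _ /mapP[j _ ->]; rewrite divr_ge0 ?ler0n.
Qed.

Lemma dmoment_cyclic_atoms a z w d m : d.-primitive_root w ->
  dmoment (cyclic_atoms a z w d) m = if (d %| m)%N then a * z ^+ m else 0.
Proof.
move=> w_prim; rewrite /dmoment big_map big_mkord /=.
under eq_bigr do rewrite exprMn -exprM mulnC exprM mulrA.
rewrite -mulr_sumr prim_root_expr_sum //; case: ifP => _; last by rewrite mulr0.
by rewrite mulrAC divfK // pnatr_eq0 -lt0n (prim_order_gt0 w_prim).
Qed.

Lemma atomic_moments_exist (t : nat -> C) D : 0 < t 0 ->
  exists2 L, nonneg_weights L & forall m, (m <= D)%N -> dmoment L m = t m.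
Proof.
elim: D t => [|D IH] t t0_gt0.
  exists [:: (t 0, 0)]; first by rewrite /nonneg_weights /= ltW.
  by move=> [|//] _; rewrite /dmoment big_seq1 expr0 mulr1.
pose a := t 0 / 2; have a_gt0 : 0 < a by rewrite divr_gt0.
have [L0 L0_ge0 L0_mom] := IH (fun m => if m is 0 then a else t m) a_gt0.
pose d := D.+1; have [w w_prim] := @prim_root_exists d isT.
pose z := d.-root ((t d - dmoment L0 d) / a).
exists (L0 ++ cyclic_atoms a z w d) => [|m].
  rewrite [nonneg_weights _]all_cat; apply/andP.
  by split; last exact: nonneg_cyclic_atoms a z w d (ltW a_gt0).
rewrite leq_eqVlt dmoment_cat dmoment_cyclic_atoms // => /orP[/eqP->|m_le_D].
  by rewrite dvdnn rootCK // mulrC divfK ?gt_eqF // addrC subrK.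
case: m m_le_D => [|m] m_le_D; rewrite L0_mom //.
  by rewrite dvdn0 expr0 mulr1 -splitr.
by rewrite gtnNdvd // addr0.
Qed.
End DiscreteMoments.

Section ComplexMeasurable.
Context d (T : measurableType d) (R : realType).

Definition cmeasurable (f : T -> R[i]) :=
  measurable_fun [set: T] (fun p => complex.Re (f p)) /\
  measurable_fun [set: T] (fun p => complex.Im (f p)).

Lemma cmeasurable_cst (c : R[i]) : cmeasurable (fun=> c).
Proof. by split; exact: measurable_cst. Qed.

Lemma cmeasurableM (f g : T -> R[i]) :
  cmeasurable f -> cmeasurable g -> cmeasurable (fun p => f p * g p).
Proof.
move=> [f1 f2] [g1 g2]; split.
  have -> : (fun p => complex.Re (f p * g p)) =
      (fun p => complex.Re (f p) * complex.Re (g p) - complex.Im (f p) * complex.Im (g p)).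
    by apply: funext => p; case: (f p) => ? ?; case: (g p).
  by apply: measurable_funB; exact: measurable_funM.
have -> : (fun p => complex.Im (f p * g p)) =
    (fun p => complex.Re (f p) * complex.Im (g p) + complex.Im (f p) * complex.Re (g p)).
  by apply: funext => p; case: (f p) => ? ?; case: (g p).
by apply: measurable_funD; exact: measurable_funM.
Qed.

Lemma cmeasurable_prod (I : Type) (r : seq I) (F : I -> T -> R[i]) :
  (forall i, cmeasurable (F i)) -> cmeasurable (fun p => \prod_(i <- r) F i p).
Proof.
move=> F_meas; elim: r => [|i r IH].
  under [X in cmeasurable X]funext do rewrite big_nil.
  exact: cmeasurable_cst.
under [X in cmeasurable X]funext do rewrite big_cons.
exact: cmeasurableM.
Qed.

Lemma cmeasurableX (f : T -> R[i]) m : cmeasurable f -> cmeasurable (fun p => f p ^+ m).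
Proof.
move=> f_meas; have -> : (fun p => f p ^+ m) = (fun p => \prod_(0 <= j < m) f p).
  by apply: funext => p; rewrite prodr_const_nat subn0.
exact: cmeasurable_prod.
Qed.
End ComplexMeasurable.

Section AtomicMeasure.
Context d (T : measurableType d) (R : realType).
Implicit Types L : seq ({nonneg R} * T).

Fixpoint atomic_measure L : {measure set T -> \bar R} :=
  if L is x :: L' then measure_add (mscale x.1 (\d_x.2)) (atomic_measure L')
  else mzero.

Lemma ge0_integral_atomic_measure L (g : T -> R) :
  (forall p, 0 <= g p) -> measurable_fun [set: T] g ->
  (\int[atomic_measure L]_p (g p)%:E = (\sum_(x <- L) x.1%:num * g x.2)%:E)%E.
Proof.
move=> g_ge0 g_meas; have gE_meas := (measurable_EFinP _ _).2 g_meas.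
have gE_ge0 p : [set: T] p -> (0 <= (g p)%:E)%E by rewrite lee_fin.
elim: L => [|x L IH] /=; first by rewrite integral_measure_zero big_nil.
rewrite ge0_integral_measure_add // IH ge0_integral_mscale // integral_dirac //.
by rewrite diracT mul1e big_cons EFinD EFinM.
Qed.

Lemma atomic_measure_integrable L (f : T -> R) :
  measurable_fun [set: T] f -> (atomic_measure L).-integrable [set: T] (EFin \o f).
Proof.
move=> f_meas; apply/integrableP; split; first exact/measurable_EFinP.
rewrite ge0_integral_atomic_measure //; first exact: ltry.
exact: measurableT_comp (@normr_measurable _ _) f_meas.
Qed.

Lemma integral_atomic_measure L (f : T -> R) : measurable_fun [set: T] f ->
  (\int[atomic_measure L]_p (f p)%:E = (\sum_(x <- L) x.1%:num * f x.2)%:E)%E.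
Proof.
move=> f_meas; rewrite integralE funerpos funerneg.
rewrite !ge0_integral_atomic_measure //; last 2 first.
- exact: measurable_funrneg.
- exact: measurable_funrpos.
rewrite -EFinB -sumrB; congr (_%:E); apply: eq_bigr => x _.
by rewrite -mulrBr -[in RHS](funrposBneg f).
Qed.

Lemma atomic_measure_setC L (A : set T) :
  (forall x, x \in L -> A x.2) -> atomic_measure L (~` A) = 0%E.
Proof.
elim: L => [//|x L IH] L_A; rewrite [atomic_measure _ _]measure_addE IH; last first.
  by move=> y yL; apply: L_A; rewrite inE yL orbT.
rewrite adde0; change (x.1%:num%:E * \d_x.2 (~` A) = 0)%E.
by rewrite diracE memNset ?mule0 //; apply; apply/L_A/mem_head.
Qed.
End AtomicMeasure.

Lemma finite_set_bounded (A : Type) (K : set A) (g : A -> nat) :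
  finite_set K -> exists M, forall k, K k -> (g k <= M)%N.
Proof.
move=> /(finite_image g)/finite_seqP[r r_gK]; exists (\max_(x <- r) x)%N => k Kk.
have : [set` r] (g k) by rewrite -r_gK; exists k.
by move=> /= gk_r; exact: (leq_bigmax_seq _ gk_r).
Qed.

Definition encode n (B : nat) (k : 'I_n -> nat) : nat := (\sum_(i < n) B ^ i * k i)%N.

Lemma encodeS n B (k : 'I_n.+1 -> nat) :
  encode B k = (encode B (fun j => k (lift ord0 j)) * B + k ord0)%N.
Proof.
rewrite /encode big_ord_recl expn0 mul1n addnC big_distrl; congr (_ + _).
by apply: eq_bigr => j _; rewrite lift0 expnS -mulnA mulnC.
Qed.

Lemma encode_inj n B (k k' : 'I_n -> nat) : (forall i, k i < B)%N ->
  (forall i, k' i < B)%N -> encode B k = encode B k' -> k = k'.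
Proof.
elim: n k k' => [|n IH] k k' k_lt k'_lt; first by move=> _; apply: funext => -[].
have B_gt0 : (0 < B)%N by exact: leq_ltn_trans (k_lt ord0).
rewrite !encodeS => e.
have e0 : k ord0 = k' ord0.
  by have := congr1 (modn^~ B) e; rewrite /= !modnMDl !modn_small.
have /IH e_lift : encode B (fun j => k (lift ord0 j)) = encode B (fun j => k' (lift ord0 j)).
  by have := congr1 (divn^~ B) e; rewrite /= !divnMDl // !divn_small ?addn0.
apply: funext => i; case: (unliftP ord0 i) => [j ->|->] //.
by have := congr1 (@^~ j) (e_lift (fun _ => k_lt _) (fun _ => k'_lt _)).
Qed.

Section MomentCurve.
Variables (R : realType) (n : nat).
Local Notation T := (CnB R n).
Implicit Types (k : 'I_n -> nat) (L : seq (R[i] * R[i])).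

Lemma Cn_continuous_measurable (f : Cn R n -> R) :
  continuous f -> measurable_fun [set: T] (f : T -> R).
Proof.
move=> /continuousP f_cont; apply: (measurability _ (RGenOpens.measurableE R)).
move=> _ [_ [a [b ->] <-]]; apply: sub_sigma_algebra; rewrite setTI.
exact/f_cont/interval_open.
Qed.

Lemma cmeasurable_monomial k : cmeasurable (monomial k : T -> R[i]).
Proof.
apply: cmeasurable_prod => i; apply: cmeasurableX.
split; apply: Cn_continuous_measurable => p.
- apply: (@continuous_comp _ _ _ fst (fun M : 'rV[R]_n => M 0 i)).
    exact: cvg_fst.
  exact: coord_continuous.
- apply: (@continuous_comp _ _ _ snd (fun M : 'rV[R]_n => M 0 i)).
    exact: cvg_snd.
  exact: coord_continuous.
Qed.

Lemma atomic_measure_cmoment (L : seq ({nonneg R} * T)) (f : T -> R[i]) :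
  cmeasurable f ->
  cintegrable (atomic_measure L) f /\
  cintegral (atomic_measure L) f = \sum_(x <- L) (x.1%:num)%:C%C * f x.2.
Proof.
move=> [Re_meas Im_meas]; split; first by split; exact: atomic_measure_integrable.
rewrite /cintegral !integral_atomic_measure //=.
elim: L => [|x L IH]; first by rewrite !big_nil.
rewrite !big_cons -IH; case: (f x.2) => a b.
by apply/eqP; rewrite eq_complex /= !mul0r subr0 addr0 !eqxx.
Qed.

Lemma atomic_measure_compact_support (L : seq ({nonneg R} * T)) :
  compact_support (atomic_measure L).
Proof.
exists [set` map snd L]; split; first exact/finite_compact/finite_seq.
by apply: atomic_measure_setC => x xL; exact: map_f.
Qed.

Definition curve_point (B : nat) (w : R[i]) : Cn R n :=
  (\row_i complex.Re (w ^+ (B ^ i)), \row_i complex.Im (w ^+ (B ^ i))).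

Lemma monomial_curve_point B k w : monomial k (curve_point B w) = w ^+ encode B k.
Proof.
rewrite /monomial /encode -prodrXr; apply: eq_bigr => i _.
by rewrite /zcoord /= !mxE exprM; case: (w ^+ _).
Qed.

(* The weights of [L] are meant to be nonnegative reals; [|Re _|] is then the
   identity on them. *)
Definition curve_measure B L : {measure set T -> \bar R} :=
  atomic_measure [seq (`|complex.Re x.1|%:nng, curve_point B x.2 : T) | x <- L].

Lemma curve_measure_moment B L k : nonneg_weights L ->
  cintegrable (curve_measure B L) (monomial k) /\
  cintegral (curve_measure B L) (monomial k) = dmoment L (encode B k).
Proof.
move=> /allP L_ge0; rewrite /curve_measure; set atoms := map _ L.
have [? ->] := atomic_measure_cmoment atoms (cmeasurable_monomial k).
split=> //; rewrite big_map /dmoment !big_seq; apply: eq_bigr => x /L_ge0 /=.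
rewrite monomial_curve_point; case: x.1 => a b; rewrite lecE /= => /andP[/eqP-> a_ge0].
by rewrite ger0_norm.
Qed.

Lemma curve_measure_has_moments B L K s : nonneg_weights L ->
  (forall k, K k -> dmoment L (encode B k) = s k) ->
  has_moments (curve_measure B L) K s /\ compact_support (curve_measure B L).
Proof.
move=> L_ge0 L_s; split; last exact: atomic_measure_compact_support.
by move=> k /L_s <-; exact: curve_measure_moment.
Qed.

Implicit Types (mu : {measure set (CnB R n) -> \bar R})
  (K : set ('I_n -> nat)) (s : ('I_n -> nat) -> R[i]).

Lemma monomial0 (p : Cn R n) : monomial (fun=> 0%N) p = 1.
Proof. by apply: big1 => i _; rewrite expr0. Qed.

Lemma has_moments_necessary mu K s : K (fun=> 0%N) -> has_moments mu K s ->
  0 < s (fun=> 0%N) \/ (forall k, K k -> s k = 0).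
Proof.
move=> K0 mu_s; have [[int1 _] <-] := mu_s _ K0.
have muT_fin : (mu [set: CnB R n] < +oo)%E.
  move/integrableP: int1 => [_]; under eq_integral do rewrite monomial0 /= normr1.
  by rewrite integral_cst // mul1e.
have [muT0|muT_neq0] := eqVneq (mu [set: CnB R n]) 0%E.
  right => k /mu_s[[intRe intIm] <-].
  rewrite /cintegral !null_set_integral //.
  - exact: measurable_int intIm.
  - exact: measurable_int intRe.
left; rewrite /cintegral.
rewrite (eq_integral (cst 1%E)) => [|p _]; last by rewrite monomial0.
rewrite integral_cst // mul1e (eq_integral (cst 0%E)) => [|p _]; last by rewrite monomial0.
rewrite integral0 ltcE /= eqxx fine_gt0 //.
by rewrite muT_fin andbT lt0e muT_neq0 measure_ge0.
Qed.

Lemma curve_moments_exist K s : finite_set K -> K (fun=> 0%N) ->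
  0 < s (fun=> 0%N) -> exists B L,
  nonneg_weights L /\ forall k, K k -> dmoment L (encode B k) = s k.
Proof.
move=> K_fin K0 s0_gt0.
have [M K_le_M] := finite_set_bounded (fun k => \max_(i < n) k i)%N K_fin.
pose B := M.+1.
have K_lt_B k : K k -> forall i, (k i < B)%N.
  by move=> Kk i; rewrite ltnS (leq_trans (leq_bigmax i)) ?K_le_M.
have encode_injK : {in K &, injective (encode B)}.
  by move=> k k' /[!inE] Kk Kk'; apply: encode_inj; exact: K_lt_B.
pose t := s \o pinv K (encode B).
have tE k : K k -> t (encode B k) = s k by move=> Kk; rewrite /t /= pinvKV ?inE.
have [D K_le_D] := finite_set_bounded (encode B) K_fin.
have encode0 : encode B (fun _ : 'I_n => 0%N) = 0%N.
  by rewrite /encode big1 // => i _; rewrite muln0.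
have t0_gt0 : 0 < t 0%N by rewrite -encode0 tE.
have [L L_ge0 L_t] := atomic_moments_exist D t0_gt0.
by exists B, L; split=> // k Kk; rewrite L_t ?tE ?K_le_D.
Qed.

Lemma compact_solution_exists K s : finite_set K -> K (fun=> 0%N) ->
  0 < s (fun=> 0%N) \/ (forall k, K k -> s k = 0) ->
  exists mu, has_moments mu K s /\ compact_support mu.
Proof.
move=> K_fin K0 [s0_gt0|s_eq0].
  have [B [L [L_ge0 L_s]]] := curve_moments_exist K_fin K0 s0_gt0.
  by exists (curve_measure B L); exact: curve_measure_has_moments.
exists (curve_measure 0 [::]); apply: curve_measure_has_moments => // k Kk.
by rewrite s_eq0 // /dmoment big_nil.
Qed.

End MomentCurve.

Theorem theorem2p1 (R : realType) (n : nat) (hn : (0 < n)%N)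
    (K : set ('I_n -> nat)) (hKfin : finite_set K) (hK0 : K (fun _ => 0%N))
    (s : ('I_n -> nat) -> R[i]) :
  ((exists mu : {measure set (CnB R n) -> \bar R}, has_moments mu K s) <->
     (0 < s (fun _ => 0%N) \/ (forall k, K k -> s k = 0)))
  /\
  ((0 < s (fun _ => 0%N) \/ (forall k, K k -> s k = 0)) ->
     exists mu : {measure set (CnB R n) -> \bar R},
       has_moments mu K s /\ compact_support mu).
Proof.
have sufficient := compact_solution_exists (s := s) hKfin hK0.
split=> //; split; first by case=> mu; exact: has_moments_necessary.
by case/sufficient => mu [? _]; exists mu.
Qed.
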